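(* Let $L$ be a finite lattice, $\varphi\in R(L)$ with Möbius inverse $f$, and let $V$ be an order ideal of $L$. Then the support $\{x\in L: f(x)\neq0\}$ of $f$ is contained in $V$ if and only if $\nabla_V^b\varphi=0$ for every $b\in L\setminus V$.
   Context: $L$ is a finite lattice with order $\le$, meet $\wedge$, maximum $\hat1$; $R(L)$ is the space of real-valued functions on $L$. The Möbius inverse of $\varphi$ is the unique $f\in R(L)$ with $\varphi(x)=\sum_{y\le x}f(y)$ for all $x$. An order ideal (down-set) is a subset $V$ with $x\le y\in V\Rightarrow x\in V$. For a finite $A\subseteq L$ and $b\in L$, $\nabla_A^b\varphi=\sum_{A'\subseteq A}(-1)^{|A'|}\varphi(\bigwedge A'\wedge b)$ where $\bigwedge A'$ is the meet of $A'$ and $\bigwedge\emptyset=\hat1$; for nonempty $A=\{a_1,\dots,a_n\}$ this equals $\nabla_{a_1,\ldots,a_n}\varphi(b)$, where $\nabla_a\varphi(x)=\varphi(x)-\varphi(x\wedge a)$ and successive differences are iterated. *)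

From HB Require Import structures.
From mathcomp Require Import all_boot all_order all_algebra.
From mathcomp Require Import reals.
Set Implicit Arguments. Unset Strict Implicit. Unset Printing Implicit Defensive.
Import Order.TTheory GRing.Theory Num.Theory.
Local Open Scope ring_scope.
Local Open Scope order_scope.

(* A finite lattice L is a [finTBLatticeType d] (finite, nonempty, so it has
   a top \top = hat 1 and a bottom).  Real-valued functions: L -> R, R : realType. *)

Definition mobius_inverse (d : Order.disp_t) (L : finTBLatticeType d)
  (R : realType) (phi f : L -> R) : Prop :=
  forall x : L, phi x = (\sum_(y : L | (y <= x)%O) f y)%R.

Definition order_ideal (d : Order.disp_t) (L : finTBLatticeType d)
  (V : {set L}) : Prop :=
  forall x y : L, (x <= y)%O -> y \in V -> x \in V.

Definition nabla (d : Order.disp_t) (L : finTBLatticeType d)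
  (R : realType) (A : {set L}) (b : L) (phi : L -> R) : R :=
  (\sum_(A' in powerset A)
     (-1) ^+ #|A'| * phi ((\meet_(a in A') a) `&` b))%R.

From HB Require Import structures.
From mathcomp Require Import all_boot all_order all_algebra.
From mathcomp Require Import reals.
Set Implicit Arguments. Unset Strict Implicit. Unset Printing Implicit Defensive.
Import Order.TTheory GRing.Theory Num.Theory.
Local Open Scope ring_scope.

(* Expanding [phi] by its Moebius inverse and exchanging the sums, the
   coefficient of [f y] in [nabla V b phi] is, for [y <= b], the alternating
   sum over the subsets of [V] lying above [y]; it is [1] if no element of [V]
   lies above [y], i.e. ([V] being a down-set) if [y] is not in [V], and [0]
   otherwise.  So [nabla V b phi] sums [f] over the elements below [b] and
   outside [V], and by induction along [<] these sums all vanish exactly when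
   [f] vanishes outside [V]. *)

Lemma sum_powerset_sign (T : finType) (R : pzRingType) (S : {set T}) :
  \sum_(A in powerset S) (-1) ^+ #|A| = (S == set0)%:R :> R.
Proof.
have [-> | /set0Pn[x xS]] := eqVneq S set0.
  by rewrite powerset0 big_set1 cards0 expr0.
pose toggle (A : {set T}) := if x \in A then A :\ x else x |: A.
have toggleK : involutive toggle.
  move=> A; rewrite /toggle; have [xA | xA] := boolP (x \in A).
    by rewrite setD11 setD1K.
  by rewrite setU11 setU1K.
have toggle_powerset A : (toggle A \in powerset S) = (A \in powerset S).
  have xSS : x |: S = S by apply/setUidPr; rewrite sub1set.
  rewrite !powersetE /toggle; case: ifP => _; last by rewrite subUset sub1set xS.
  by rewrite subDset xSS.
have x_toggle A : (x \in toggle A) = (x \notin A).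
  by rewrite /toggle; case: ifP; rewrite ?setD11 ?setU11.
have sign_toggle (A : {set T}) :
    x \notin A -> (-1) ^+ #|toggle A| = - (-1) ^+ #|A| :> R.
  by move=> xA; rewrite /toggle (negbTE xA) cardsU1 xA exprS mulN1r.
(* [toggle] pairs the subsets containing [x] with those avoiding it. *)
rewrite (bigID (fun A : {set T} => x \in A)) /= (reindex_inj (inv_inj toggleK)) /=.
rewrite (eq_bigl (fun A => (A \in powerset S) && (x \notin A))); last first.
  by move=> A; rewrite toggle_powerset x_toggle.
by rewrite -big_split big1 //= => A /andP[_ xA]; rewrite sign_toggle // addNr.
Qed.

Lemma sum_powerset_sub_sign (T : finType) (R : pzRingType) (V U : {set T}) :
  \sum_(A in powerset V | A \subset U) (-1) ^+ #|A| = (V :&: U == set0)%:R :> R.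
Proof.
rewrite -sum_powerset_sign; apply: eq_bigl => A.
by rewrite powersetI in_setI (powersetE A U).
Qed.

Lemma fin_lt_ind d (T : finPOrderType d) (P : T -> Prop) :
  (forall x, (forall y, (y < x)%O -> P y) -> P x) -> forall x, P x.
Proof.
move=> IH x; have [n] := ubnP #|[set y | (y < x)%O]|.
elim: n x => // n IHn x; rewrite ltnS => below_x.
apply: IH => y yx; apply: IHn; apply: leq_trans below_x.
apply: proper_card; apply/properP; split.
  by apply/subsetP => z; rewrite !inE => /lt_trans; apply.
by exists y; rewrite !inE ?ltxx.
Qed.

Lemma eq0_off_of_sums_eq0 d (T : finPOrderType d) (R : nmodType)
    (f : T -> R) (V : {set T}) :
  (forall b, b \notin V -> \sum_(y | (y <= b)%O && (y \notin V)) f y = 0) ->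
  forall x, x \notin V -> f x = 0.
Proof.
move=> sum0; elim/fin_lt_ind => x IH xV.
rewrite -(sum0 x xV) (bigD1 x) ?lexx ?xV //= big1 ?addr0 //.
by move=> y /andP[/andP[yx yV] yNx]; apply: IH; rewrite // lt_neqAle yNx yx.
Qed.

Section Nabla.
Variables (d : Order.disp_t) (L : finTBLatticeType d).

Lemma le_meetsI (y b : L) (A : {set L}) :
  (y <= (\meet_(a in A) a) `&` b)%O = (A \subset [set z | y <= z]%O) && (y <= b)%O.
Proof.
rewrite lexI; congr (_ && _).
by apply/meetsP/subsetP => yA a /yA; rewrite inE.
Qed.

Lemma order_ideal_setI_ge_eq0 (V : {set L}) (y : L) : order_ideal V ->
  (V :&: [set z | y <= z]%O == set0) = (y \notin V).
Proof.
move=> downV; apply/idP/idP => [/eqP VU0 | yV].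
  apply/negP => yV; have : y \in V :&: [set z | (y <= z)%O] by rewrite !inE yV lexx.
  by rewrite VU0 inE.
apply/eqP/setP => z; rewrite !inE; apply/negbTE/andP => -[zV yz].
by rewrite (downV _ _ yz zV) in yV.
Qed.

Lemma nabla_mobius (R : realType) (phi f : L -> R) (V : {set L}) (b : L) :
  mobius_inverse phi f -> order_ideal V ->
  nabla V b phi = \sum_(y | (y <= b)%O && (y \notin V)) f y.
Proof.
move=> phiE downV; rewrite /nabla.
under eq_bigr => A _ do rewrite phiE big_distrr /= big_mkcond /=.
rewrite exchange_big [RHS]big_mkcond /=; apply: eq_bigr => y _.
under eq_bigr => A _ do rewrite le_meetsI.
have [yb | ybN] := boolP (y <= b)%O; last by rewrite big1 // => A; rewrite andbF.
under eq_bigr => A _ do rewrite andbT.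
rewrite -big_mkcondr -big_distrl sum_powerset_sub_sign order_ideal_setI_ge_eq0 //=.
by case: (y \notin V); rewrite ?mul1r ?mul0r.
Qed.

End Nabla.

Theorem proposition2p6 (d : Order.disp_t) (L : finTBLatticeType d)
  (R : realType) (phi f : L -> R) (V : {set L}) :
  mobius_inverse phi f -> order_ideal V ->
  ((forall x : L, f x != 0 -> x \in V) <->
   (forall b : L, b \notin V -> nabla V b phi = 0)).
Proof.
move=> phiE downV; have nablaE b := nabla_mobius b phiE downV.
split=> [supp b _ | nabla0 x].
  by rewrite nablaE big1 // => y /andP[_ yV]; apply/eqP; apply: contraR yV; apply: supp.
apply: contraR => xV; apply/eqP; apply: (eq0_off_of_sums_eq0 _ xV) => b bV.
by rewrite -nablaE nabla0.
Qed.
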